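(* Under the same setting, with probability at least $1-(1/2)^d$ the BACON Sketch estimate satisfies $$\hat{E}_{dst} \le E_{dst} + 2m\left(1-e^{-n/(mw)}\right).$$
   Context: BACON Sketch: a $d\times w\times m$ array of bits, organised as $d$ rows, each row consisting of $w$ Bitmap registers of $m$ bits, all initially $0$. It uses a hash function $h_{bm}$ mapping source IPs to $\{0,\dots,m-1\}$ and $d$ pairwise-independent hash functions $h^1_{cm},\dots,h^d_{cm}$ mapping destination IPs to $\{0,\dots,w-1\}$. Update: for each packet with source $src$ and destination $dst$, for each row $i$, the bit with index $h_{bm}(src)$ inside the Bitmap register number $h^i_{cm}(dst)$ of row $i$ is set to $1$. Query: for destination $dst$, $E_i$ is the number of $1$-bits in Bitmap register $h^i_{cm}(dst)$ of row $i$, and $\hat{E}_{dst}=\min_i E_i$. In a time interval, $n$ is the number of distinct source IPs, $E_{dst}$ is the true number of distinct source IPs contacting destination $dst$. Modelling assumptions: hash values uniform and independent across distinct inputs and rows; the expected number of distinct elements from other destinations colliding into the register of $dst$ in a row is $(n-E_{dst})/w$; with $m$ large, the expected number of $1$-bits in a register receiving $k$ distinct sources is $m(1-e^{-k/m})$; the pure Bitmap estimate (without collisions) $\hat{E}^{Bitmap}_{dst}$ satisfies $\hat{E}^{Bitmap}_{dst}\le E_{dst}$. *)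

From HB Require Import structures.
From mathcomp Require Import all_boot all_order all_algebra.
From mathcomp Require Import reals sequences exp.
Set Implicit Arguments.
Unset Strict Implicit.
Unset Printing Implicit Defensive.
Import Order.TTheory GRing.Theory Num.Theory.
Local Open Scope ring_scope.

(* A discrete probability on a finite sample space T (randomness of the hashes). *)
Definition is_prob (R : realType) (T : finType) (P : T -> R) : Prop :=
  (forall t, 0 <= P t) /\ \sum_(t : T) P t = 1.

Definition Pr (R : realType) (T : finType) (P : T -> R) (A : pred T) : R :=
  \sum_(t : T | A t) P t.

Definition Ex (R : realType) (T : finType) (P : T -> R) (X : T -> R) : R :=
  \sum_(t : T) P t * X t.

Definition rows_indep (R : realType) (T : finType) (P : T -> R) (d : nat)
  (U : Type) (V : nat -> T -> U) : Prop :=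
  forall (J : {set 'I_d}) (A : nat -> pred U),
    Pr P [pred t | [forall i in J, A i (V i t)]]
    = \prod_(i in J) Pr P [pred t | A i (V i t)].

(* BACON query: hat E_dst = min over the d rows of E_i (rows indexed 0..d-1;
   the row-0 value is used as the initial value of the fold, which is harmless
   since row 0 is among the rows when d > 0). *)
Definition bacon_estimate (R : realType) (T : finType) (d : nat)
  (Er : nat -> T -> R) (t : T) : R :=
  \big[Num.min/Er 0%N t]_(i < d) Er i t.

From HB Require Import structures.
From mathcomp Require Import all_boot all_order all_algebra.
From mathcomp Require Import reals sequences exp.
From mathcomp Require Import ring lra.
Import Order.TTheory GRing.Theory Num.Theory.
Local Open Scope ring_scope.

(* Let a = m (1 - e^{-n/(mw)}).  The argument has three layers.
   1. Expected collision load of one row.  Summing the per-level hypothesis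
      "E[C_i | X_i = k] = m (1 - e^{-k/m})" over the levels k gives
      E[C_i] = E[f(X_i)] with f(k) = m (1 - e^{-k/m}).  Since f is concave,
      it lies below each of its tangents, so E[f(X_i)] <= f(E[X_i]) <= a,
      because E[X_i] = (n - E_dst)/w <= n/w.
   2. One row fails with probability at most 1/2: by Markov's inequality,
      Pr[C_i > 2a] <= E[C_i]/(2a) <= 1/2 (when a = 0, C_i = 0 almost surely).
   3. The estimate is a minimum over rows, so if some row has C_i <= 2a then
      the estimate is at most E^Bitmap + 2a <= E_dst + 2a.  Hence the bound
      can only fail when every row fails, an event of probability at most
      (1/2)^d by independence of the rows. *)

Section FiniteProbability.
Variables (R : realType) (T : finType) (P : T -> R).
Hypothesis P_prob : is_prob P.

Lemma Pr_ge0 (A : pred T) : 0 <= Pr P A.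
Proof. by apply: sumr_ge0 => t _; case: P_prob. Qed.

Lemma Pr_sub (A B : pred T) : {subset A <= B} -> Pr P A <= Pr P B.
Proof.
move=> sAB; rewrite /Pr big_mkcond [leRHS]big_mkcond /=.
apply: ler_sum => t _; case: P_prob => P0 _.
case At: (A t); first by rewrite (sAB t At : B t).
by case: (B t).
Qed.

Lemma Pr_predC (A : pred T) : Pr P A = 1 - Pr P (predC A).
Proof. by case: P_prob => _ <-; rewrite /Pr [\sum_t P t](bigID A) addrK. Qed.

Lemma markov (X : T -> R) (c : R) :
  (forall t, 0 <= X t) -> 0 < c -> Pr P [pred t | c < X t] * c <= Ex P X.
Proof.
move=> X0 c0; case: P_prob => P0 _.
rewrite /Pr mulr_suml /Ex [leRHS](bigID [pred t | c < X t]) /=.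
rewrite -[leLHS]addr0 lerD //; last by apply: sumr_ge0 => t _; rewrite mulr_ge0.
by apply: ler_sum => t /ltW cX; rewrite ler_wpM2l.
Qed.

Lemma Pr_pos_mean0 (X : T -> R) :
  (forall t, 0 <= X t) -> Ex P X <= 0 -> Pr P [pred t | 0 < X t] = 0.
Proof.
move=> X0 EX0; case: P_prob => P0 _.
have PX0 t : true -> 0 <= P t * X t by rewrite mulr_ge0.
have EX_eq0 : Ex P X = 0 by apply/eqP; rewrite eq_le EX0 sumr_ge0.
rewrite /Pr big1 // => t /= Xt_gt0.
have /eqP : P t * X t = 0 by apply: (psumr_eq0P PX0 EX_eq0).
by rewrite mulf_eq0 [X t == 0]gt_eqF // orbF => /eqP.
Qed.

Lemma markov_half (X : T -> R) (a : R) :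
  (forall t, 0 <= X t) -> 0 <= a -> Ex P X <= a ->
  Pr P [pred t | 2 * a < X t] <= 1 / 2.
Proof.
move=> X0 a0 EXa; have [a_gt0 | a_le0] := ltrP 0 a.
  have := le_trans (@markov X _ X0 (mulr_gt0 (ltr0n _ 2) a_gt0)) EXa.
  have := Pr_ge0 [pred t | 2 * a < X t]; nra.
have -> : a = 0 by apply/eqP; rewrite eq_le a_le0 a0.
rewrite mulr0 (@Pr_pos_mean0 X X0) //; first lra.
by rewrite (le_trans EXa).
Qed.

End FiniteProbability.

Lemma sum_by_level {R : realType} {T : finType} {X : T -> nat} {N : nat}
  (G : T -> R) :
  (forall t, (X t <= N)%N) ->
  \sum_(t : T) G t = \sum_(k < N.+1) \sum_(t : T | X t == k) G t.
Proof.
move=> XN; rewrite [RHS](exchange_big_dep predT) //=; apply: eq_bigr => t _.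
have Xt_lt : (X t < N.+1)%N by rewrite ltnS.
by rewrite (big_pred1 (Ordinal Xt_lt)) // => k; rewrite eq_sym -val_eqE.
Qed.

Lemma Ex_by_level {R : realType} {T : finType} {P : T -> R}
  {X : T -> nat} {C : T -> R} {g : nat -> R} :
  (forall k, \sum_(t : T | X t == k) P t * C t = g k * Pr P [pred t | X t == k]) ->
  Ex P C = Ex P (fun t => g (X t)).
Proof.
move=> Clevel; have XN t : (X t <= \max_s X s)%N by exact: leq_bigmax.
rewrite /Ex !(sum_by_level _ XN); apply: eq_bigr => k _.
rewrite Clevel /Pr mulr_sumr; apply: eq_bigr => t /eqP ->.
by rewrite mulrC.
Qed.

(* The expected number of 1-bits set by k sources in an m-bit Bitmap,
   f(k) = m (1 - e^{-k/m}), lies below its tangent at k = m x. *)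
Lemma bitmap_fill_tangent (R : realType) (m x k : R) : 0 < m ->
  m * (1 - expR (- (k / m))) <= m * (1 - expR (- x)) + expR (- x) * (k - m * x).
Proof.
move=> m_gt0; set e := expR (- x); set z := k / m.
have e_gt0 : 0 < e by exact: expR_gt0.
have split_exp : expR (- z) = e * expR (x - z).
  by rewrite -expRD; congr expR; ring.
have k_eq : k = m * z by rewrite /z mulrC divfK ?gt_eqF.
have tangent_exp : e * (1 + (x - z)) <= e * expR (x - z).
  by rewrite ler_pM2l // expR_ge1Dx.
rewrite split_exp [in X in _ <= _ + _ * (X - _)]k_eq.
nra.
Qed.

Lemma Ex_bitmap_fill_le (R : realType) (T : finType) (P : T -> R)
  (m x : R) (Y : T -> R) :
  is_prob P -> 0 < m -> Ex P Y <= m * x ->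
  Ex P (fun t => m * (1 - expR (- (Y t / m)))) <= m * (1 - expR (- x)).
Proof.
move=> [P0 P1] m_gt0 EY.
set a := m * (1 - expR (- x)); set e := expR (- x).
apply: (le_trans (y := Ex P (fun t => a + e * (Y t - m * x)))).
  apply: ler_sum => t _; rewrite ler_wpM2l //.
  exact: bitmap_fill_tangent.
have -> : Ex P (fun t => a + e * (Y t - m * x)) = a + e * (Ex P Y - m * x).
  rewrite /Ex; under eq_bigr do rewrite mulrDr.
  rewrite big_split /= -mulr_suml P1 mul1r; congr (_ + _).
  rewrite -[in RHS](mul1r (m * x)) -P1 mulr_suml -sumrB mulr_sumr.
  by apply: eq_bigr => t _; ring.
by rewrite gerDl mulr_ge0_le0 ?expR_ge0 ?subr_le0.
Qed.

Lemma bacon_estimate_le_row {R : realType} {T : finType} {d : nat}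
  (Er : nat -> T -> R) (t : T) (i : 'I_d) :
  bacon_estimate d Er t <= Er i t.
Proof. exact: (bigmin_le _ i (fun i : 'I_d => Er i t)). Qed.

Lemma Pr_all_rows_le {R : realType} {T : finType} {P : T -> R} {d : nat}
  {U : Type} {V : nat -> T -> U} {A : nat -> pred U} {q : R} :
  is_prob P -> rows_indep P d V ->
  (forall i : 'I_d, Pr P [pred t | A i (V i t)] <= q) ->
  Pr P [pred t | [forall i in [set: 'I_d], A i (V i t)]] <= q ^+ d.
Proof.
move=> P_prob indep Ai_le; rewrite indep.
rewrite -[d in q ^+ d]card_ord -cardsT -prodr_const.
by apply: ler_prod => i _; rewrite Pr_ge0 ?Ai_le.
Qed.

Theorem theorem2 (R : realType) (T : finType) (P : T -> R)
  (d m w n Edst : nat)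
  (Ebm : T -> R)              (* pure Bitmap estimate (1-bits from dst's own sources) *)
  (Er : nat -> T -> R)        (* E_i : number of 1-bits in the dst register of row i *)
  (X : nat -> T -> nat)       (* number of distinct colliding sources in row i *)
  (C : nat -> T -> R)         (* number of 1-bits set by those colliding sources *)
  :
  is_prob P ->
  (0 < d)%N -> (0 < m)%N -> (0 < w)%N -> (Edst <= n)%N ->
  (forall t, Ebm t <= Edst%:R) ->
  (forall i t, (i < d)%N -> Er i t <= Ebm t + C i t) ->
  (forall i t, (i < d)%N -> 0 <= C i t) ->
  (forall i t, (i < d)%N -> (X i t <= n - Edst)%N) ->
  (forall i, (i < d)%N -> Ex P (fun t => (X i t)%:R) = (n - Edst)%:R / w%:R) ->
  (forall i k, (i < d)%N ->
     \sum_(t : T | X i t == k) P t * C i t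
     = m%:R * (1 - expR (- (k%:R / m%:R))) * Pr P [pred t | X i t == k]) ->
  rows_indep P d (fun i t => (X i t, C i t)) ->
  1 - (1 / 2) ^+ d <=
    Pr P [pred t | bacon_estimate d Er t
                   <= Edst%:R + 2 * m%:R * (1 - expR (- (n%:R / (m%:R * w%:R))))].
Proof.
move=> P_prob _ m_gt0 w_gt0 En Ebm_le Er_le C_ge0 _ EX C_level indep.
set x := n%:R / (m%:R * w%:R); set a := m%:R * (1 - expR (- x)).
have mR : (0 : R) < m%:R by rewrite ltr0n.
have a_ge0 : 0 <= a.
  by rewrite mulr_ge0 // subr_ge0 expR_le1 oppr_le0 divr_ge0 ?mulr_ge0.
have EX_le (i : 'I_d) : Ex P (fun t => (X i t)%:R) <= m%:R * x.
  have -> : m%:R * x = n%:R / w%:R by rewrite /x; field; rewrite !gt_eqF ?ltr0n.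
  by rewrite EX // ler_pM2r ?invr_gt0 ?ltr0n // ler_nat leq_subr.
have EC_le (i : 'I_d) : Ex P (C i) <= a.
  rewrite (Ex_by_level (fun k => C_level i k (ltn_ord i))).
  exact: Ex_bitmap_fill_le.
have all_fail : Pr P [pred t | [forall i in [set: 'I_d], 2 * a < C i t]]
                <= (1 / 2) ^+ d.
  apply: (Pr_all_rows_le (A := fun i p => 2 * a < p.2) P_prob indep) => i.
  exact: markov_half (fun t => C_ge0 i t (ltn_ord i)) a_ge0 (EC_le i).
rewrite Pr_predC // lerD2l lerN2; apply: le_trans all_fail; apply: Pr_sub => //.
move=> t /=; rewrite -mulrA -/a => bad; apply/forallP => i; apply/implyP => _.
rewrite ltNge; apply: contra bad => Ci_le /=.
apply: le_trans (bacon_estimate_le_row Er t i) _.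
by apply: le_trans (Er_le i t (ltn_ord i)) _; rewrite lerD.
Qed.
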